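(* Let $n$ be a positive integer and $\alpha,\beta\in\mathbb{R}$ with $\alpha>\beta$. Then $A_n^{\alpha,\beta}$ is symmetric positive definite, and its smallest eigenvalue $\lambda_1^{n,\alpha,\beta}$ satisfies \[ \lambda_1^{n,\alpha,\beta}\ \ge\ t_n\cdot \min_{1\le i\le n}J_{\alpha-\beta}(i)\cdot \min\{1,n^{2\beta}\}\ >\ 0 . \]
   Context: For $i,j$ positive integers, $(i,j)$ denotes the greatest common divisor and $[i,j]$ the least common multiple. For $\alpha,\beta\in\mathbb{R}$ and a positive integer $n$, $A_n^{\alpha,\beta}$ is the $n\times n$ real matrix with $(i,j)$ entry $(i,j)^{\alpha}[i,j]^{\beta}$. $E_n$ is the $n\times n$ matrix with $(E_n)_{ij}=1$ if $j\mid i$ and $(E_n)_{ij}=0$ otherwise; $t_n$ denotes the smallest eigenvalue and $T_n$ the largest eigenvalue of the symmetric matrix $E_n^{T}E_n$. For real $s$, $J_s$ is the arithmetical function $J_s(k)=k^{s}\prod_{p\mid k}\left(1-p^{-s}\right)$ (product over primes $p$ dividing $k$), equivalently $J_s(k)=\sum_{d\mid k} d^{s}\mu(k/d)$ where $\mu$ is the Möbius function. *)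

From Stdlib Require Import Reals Lra Lia Arith ZArith Znumtheory.
Open Scope R_scope.

(* Vectors and n x n matrices are indexed by 1..n (as in the paper):
   a vector is a function nat -> R, a matrix nat -> nat -> R; only the
   entries with indices in 1..n matter. *)

Fixpoint rsum (n : nat) (f : nat -> R) : R :=
  match n with
  | O => 0
  | S k => rsum k f + f (S k)
  end.

Fixpoint rprod (n : nat) (f : nat -> R) : R :=
  match n with
  | O => 1
  | S k => rprod k f * f (S k)
  end.

(* rmin1 m f = min_{1 <= i <= m+1} f i ; so min_{1<=i<=n} f i = rmin1 (n-1) f *)
Fixpoint rmin1 (m : nat) (f : nat -> R) : R :=
  match m with
  | O => f 1%nat
  | S m' => Rmin (rmin1 m' f) (f (S (S m')))
  end.

Definition min_1_to (n : nat) (f : nat -> R) : R := rmin1 (n - 1) f.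

Definition Amat (alpha beta : R) (i j : nat) : R :=
  Rpower (INR (Nat.gcd i j)) alpha * Rpower (INR (Nat.lcm i j)) beta.

Definition Emat (i j : nat) : R :=
  if Nat.eqb (i mod j) 0 then 1 else 0.

Definition EtE (n : nat) (i j : nat) : R :=
  rsum n (fun k => Emat k i * Emat k j).

Definition Jordan (s : R) (k : nat) : R :=
  Rpower (INR k) s *
  rprod k (fun p =>
    if prime_dec (Z.of_nat p) then
      (if Nat.eqb (k mod p) 0 then 1 - Rpower (INR p) (- s) else 1)
    else 1).

Definition symmetric_mat (n : nat) (M : nat -> nat -> R) : Prop :=
  forall i j, (1 <= i <= n)%nat -> (1 <= j <= n)%nat -> M i j = M j i.

Definition nonzero_vec (n : nat) (x : nat -> R) : Prop :=
  exists i, (1 <= i <= n)%nat /\ x i <> 0.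

Definition quad_form (n : nat) (M : nat -> nat -> R) (x : nat -> R) : R :=
  rsum n (fun i => rsum n (fun j => x i * M i j * x j)).

Definition sym_pos_def (n : nat) (M : nat -> nat -> R) : Prop :=
  symmetric_mat n M /\ forall x, nonzero_vec n x -> quad_form n M x > 0.

Definition is_eigenvalue (n : nat) (M : nat -> nat -> R) (lam : R) : Prop :=
  exists v, nonzero_vec n v /\
    forall i, (1 <= i <= n)%nat -> rsum n (fun j => M i j * v j) = lam * v i.

Definition is_smallest_eigenvalue (n : nat) (M : nat -> nat -> R) (lam : R) : Prop :=
  is_eigenvalue n M lam /\ forall mu, is_eigenvalue n M mu -> lam <= mu.

(* Theorem 3.1: with s = alpha - beta > 0, (i,j) [i,j] = i j gives A = D G D, where
   D = diag(i^beta) and G = ((i,j)^s).  Jordan's identity sum_{d | m} J_s(d) = m^s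
   gives G = E diag(J_s) E^T, so for y = D x
        x^T A x = sum_d J_s(d) ((E^T y)_d)^2 >= (min J_s) |E^T y|^2.
   As E is unitriangular, the lower bound t_n of E^T E transfers to E E^T, i.e.
   |E^T y|^2 >= t_n |y|^2, and |D x|^2 >= min(1, n^{2 beta}) |x|^2.  The resulting
   uniform bound x^T A x >= c |x|^2 with c > 0 gives positive definiteness and,
   at an eigenvector, the bound on the smallest eigenvalue. *)

From Stdlib Require Import Reals Lra Lia Arith ZArith Znumtheory.
From HB Require structures.
From mathcomp Require all_boot all_order all_algebra all_classical all_reals.
From mathcomp Require all_analysis lra Rstruct Rstruct_topology.
Open Scope R_scope.

(* Existence of a minimiser of a quadratic form on the unit sphere of R^(n+1):
   the sphere is compact and the form continuous (extreme value theorem). *)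
Module SphereMinimum.
Import structures all_boot all_order all_algebra all_classical all_reals.
Import all_analysis lra Rstruct Rstruct_topology.
Import Order.TTheory GRing.Theory Num.Theory.
Import numFieldNormedType.Exports.
Local Open Scope classical_set_scope.
Local Open Scope ring_scope.

Lemma quadratic_form_min_on_sphere (R : realType) (n : nat)
    (M : 'I_n.+1 -> 'I_n.+1 -> R) :
  exists c : 'rV[R]_n.+1,
   (\sum_(k < n.+1) c ord0 k * c ord0 k = 1) /\
   forall x : 'rV[R]_n.+1, \sum_(k < n.+1) x ord0 k * x ord0 k = 1 ->
     \sum_(k < n.+1) \sum_(l < n.+1) (c ord0 k * M k l * c ord0 l) <=
     \sum_(k < n.+1) \sum_(l < n.+1) (x ord0 k * M k l * x ord0 l).
Proof.
set S := [set x : 'rV[R]_n.+1 | \sum_(k < n.+1) x ord0 k * x ord0 k = 1].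
have addc : continuous (fun x : R * R => x.1 + x.2) by exact: add_continuous.
have coordc k : continuous (fun x : 'rV[R]_n.+1 => x ord0 k) by exact: coord_continuous.
have cstc (a : R) : continuous (fun _ : 'rV[R]_n.+1 => a) by exact: cst_continuous.
have sqnormc : continuous (fun x : 'rV[R]_n.+1 => \sum_(k < n.+1) x ord0 k * x ord0 k).
  apply: (continuous_big addc) => k _ x.
  exact: (continuousM (coordc k x) (coordc k x)).
have quadc : continuous (fun x : 'rV[R]_n.+1 =>
   \sum_(k < n.+1) \sum_(l < n.+1) (x ord0 k * M k l * x ord0 l)).
  apply: (continuous_big addc) => k _; apply: (continuous_big addc) => l _ x.
  have coefc : continuous (fun x : 'rV[R]_n.+1 => x ord0 k * M k l).
    by move=> y; exact: (continuousM (coordc k y) (cstc _ y)).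
  exact: (continuousM (coefc x) (coordc l x)).
have S_closed : closed S.
  apply: (@preimage_closed _ _
     (fun x : 'rV[R]_n.+1 => \sum_(k < n.+1) x ord0 k * x ord0 k) [set 1]).
    by move=> x _; exact: sqnormc.
  exact: closed_eq.
have S_compact : compact S.
  have cube_compact :
      compact [set v : 'rV[R]_n.+1 | forall i, `[(-1 : R), 1]%classic (v ord0 i)].
    exact: (@rV_compact _ n.+1 (fun=> `[(-1 : R), 1]%classic)
                                (fun=> @segment_compact R (-1) 1)).
  apply: (subclosed_compact S_closed cube_compact) => x Sx i /=.
  rewrite in_itv /=.
  have : x ord0 i * x ord0 i <= 1.
    rewrite -Sx (bigD1 i) //= lerDl.
    by apply: sumr_ge0 => j _; rewrite -expr2 sqr_ge0.
  by move=> h; apply/andP; split; nra.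
have S_nonempty : S !=set0.
  exists (\row_(k < n.+1) (k == ord0)%:R).
  rewrite /S /= (bigD1 ord0) //= !mxE eqxx mulr1 big1 ?addr0 // => k kn.
  by rewrite !mxE (negbTE kn) mulr0.
have [c cS cmin] := @EVT_min_rV R n.+1 _ S S_nonempty S_compact
                                 (continuous_subspaceT quadc).
exists c; split; first by move: cS; rewrite inE.
by move=> x Sx; apply: cmin; rewrite inE.
Qed.

Lemma rsum_big (n : nat) (f : nat -> R) : rsum n f = \sum_(k < n) f k.+1.
Proof.
elim: n => [|n IH]; first by rewrite big_ord0.
by rewrite big_ord_recr /= IH.
Qed.

Lemma quad_form_min_on_sphere (n : nat) (M : nat -> nat -> R) : Peano.le 1 n ->
  exists v : nat -> R, rsum n (fun i => Rmult (v i) (v i)) = 1 /\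
    forall x : nat -> R, rsum n (fun i => Rmult (x i) (x i)) = 1 ->
      Rle (quad_form n M v) (quad_form n M x).
Proof.
case: n => [/PeanoNat.Nat.nle_succ_0 []|n] _.
have [c [c1 cmin]] := @quadratic_form_min_on_sphere R n (fun k l => M k.+1 l.+1).
pose of_row (y : 'rV[R]_n.+1) (i : nat) := y ord0 (inord i.-1).
have quad_of_row (y : 'rV[R]_n.+1) : quad_form n.+1 M (of_row y) =
    \sum_(k < n.+1) \sum_(l < n.+1) (y ord0 k * M k.+1 l.+1 * y ord0 l).
  rewrite /quad_form rsum_big; apply: eq_bigr => k _.
  by rewrite rsum_big; apply: eq_bigr => l _ /=; rewrite /of_row !inord_val.
exists (of_row c); split.
  by rewrite rsum_big -c1; apply: eq_bigr => k _; rewrite /of_row /= inord_val.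
move=> x x1; pose w : 'rV[R]_n.+1 := \row_k x k.+1.
have -> : quad_form n.+1 M x = quad_form n.+1 M (of_row w).
  rewrite /quad_form !rsum_big; apply: eq_bigr => k _.
  by rewrite !rsum_big; apply: eq_bigr => l _; rewrite /of_row /w !mxE !inord_val.
rewrite !quad_of_row; apply/RleP; apply: cmin.
by rewrite -x1 rsum_big; apply: eq_bigr => k _; rewrite /w mxE.
Qed.
End SphereMinimum.

Lemma rsum_ext n f g : (forall i, (1 <= i <= n)%nat -> f i = g i) -> rsum n f = rsum n g.
Proof.
  induction n; simpl; intros H; [reflexivity|].
  rewrite IHn by (intros; apply H; lia). rewrite H by lia. reflexivity.
Qed.

Lemma rsum_plus n f g : rsum n (fun i => f i + g i) = rsum n f + rsum n g.
Proof. induction n; simpl; [lra|]. rewrite IHn. lra. Qed.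

Lemma rsum_scal n c f : rsum n (fun i => c * f i) = c * rsum n f.
Proof. induction n; simpl; [lra|]. rewrite IHn. lra. Qed.

Lemma rsum_zero n f : (forall i, (1 <= i <= n)%nat -> f i = 0) -> rsum n f = 0.
Proof. induction n; simpl; intros H; [lra|]. rewrite IHn, H by (intros; try apply H; lia). lra. Qed.

Lemma rsum_minus n f g : rsum n (fun i => f i - g i) = rsum n f - rsum n g.
Proof. induction n; simpl; [lra|]. rewrite IHn. lra. Qed.

Lemma rsum_swap n m f :
  rsum n (fun i => rsum m (fun j => f i j)) = rsum m (fun j => rsum n (fun i => f i j)).
Proof.
  induction n; simpl.
  - symmetry. apply rsum_zero. reflexivity.
  - rewrite IHn, <- rsum_plus. reflexivity.
Qed.

Lemma rsum_le n f g : (forall i, (1 <= i <= n)%nat -> f i <= g i) -> rsum n f <= rsum n g.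
Proof.
  induction n; simpl; intros H; [lra|].
  assert (rsum n f <= rsum n g) by (apply IHn; intros; apply H; lia).
  assert (f (S n) <= g (S n)) by (apply H; lia). lra.
Qed.

Lemma rsum_nonneg n f : (forall i, (1 <= i <= n)%nat -> 0 <= f i) -> 0 <= rsum n f.
Proof. intros H. rewrite <- (rsum_zero n (fun _ => 0)) by reflexivity. apply rsum_le, H. Qed.

Lemma rsum_ge_term n f k : (forall i, (1 <= i <= n)%nat -> 0 <= f i) ->
  (1 <= k <= n)%nat -> f k <= rsum n f.
Proof.
  induction n; intros H Hk; [lia|]. simpl.
  destruct (Nat.eq_dec k (S n)) as [->|Hne].
  - assert (0 <= rsum n f) by (apply rsum_nonneg; intros; apply H; lia). lra.
  - assert (f k <= rsum n f) by (apply IHn; [intros; apply H; lia|lia]).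
    assert (0 <= f (S n)) by (apply H; lia). lra.
Qed.

Lemma rsum_split a b f : rsum (a + b) f = rsum a f + rsum b (fun i => f (a + i)%nat).
Proof.
  induction b; simpl.
  - rewrite Nat.add_0_r. lra.
  - rewrite <- plus_n_Sm. simpl. rewrite IHb. lra.
Qed.

Lemma rsum_single n k f : (1 <= k <= n)%nat ->
  (forall i, (1 <= i <= n)%nat -> i <> k -> f i = 0) -> rsum n f = f k.
Proof.
  induction n; intros Hk H; [lia|]. simpl.
  destruct (Nat.eq_dec k (S n)) as [->|Hne].
  - rewrite rsum_zero by (intros; apply H; lia). lra.
  - rewrite IHn, (H (S n)) by (intros; try apply H; lia). lra.
Qed.

Lemma rsum_trunc n N f : (n <= N)%nat -> (forall i, (n < i <= N)%nat -> f i = 0) ->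
  rsum N f = rsum n f.
Proof.
  intros HN H. replace N with (n + (N - n))%nat by lia.
  rewrite rsum_split, (rsum_zero (N - n)) by (intros; apply H; lia). lra.
Qed.

Definition dot (n : nat) (x y : nat -> R) : R := rsum n (fun i => x i * y i).

Definition norm2 (n : nat) (x : nat -> R) : R := dot n x x.

Definition matvec (n : nat) (M : nat -> nat -> R) (x : nat -> R) (i : nat) : R :=
  rsum n (fun j => M i j * x j).

Lemma norm2_nonneg n x : 0 <= norm2 n x.
Proof. apply rsum_nonneg. intros. nra. Qed.

Lemma norm2_zero n x : norm2 n x = 0 -> forall i, (1 <= i <= n)%nat -> x i = 0.
Proof.
  intros H i Hi.
  assert (x i * x i <= 0).
  { rewrite <- H. apply (rsum_ge_term n (fun i => x i * x i)); [intros; nra|exact Hi]. }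
  nra.
Qed.

Lemma norm2_pos n x : nonzero_vec n x -> 0 < norm2 n x.
Proof.
  intros [i [Hi Hx]].
  assert (x i * x i <= norm2 n x)
    by (apply (rsum_ge_term n (fun i => x i * x i)); [intros; nra|exact Hi]).
  assert (0 < x i * x i) by nra. lra.
Qed.

Lemma norm2_pos_nonzero n x : 0 < norm2 n x -> nonzero_vec n x.
Proof.
  induction n; unfold norm2, dot; simpl; intros H; [lra|].
  destruct (Req_dec (x (S n)) 0) as [H0|H0].
  - destruct IHn as [i [Hi Hxi]]; [unfold norm2, dot; nra|]. exists i. split; [lia|exact Hxi].
  - exists (S n). split; [lia|exact H0].
Qed.

Lemma norm2_scal n x c : norm2 n (fun i => c * x i) = c * c * norm2 n x.
Proof.
  unfold norm2, dot. rewrite <- rsum_scal. apply rsum_ext. intros. ring.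
Qed.

Lemma norm2_scale_ge n a c x : (forall i, (1 <= i <= n)%nat -> c <= a i * a i) ->
  c * norm2 n x <= norm2 n (fun i => a i * x i).
Proof.
  intros Ha. unfold norm2, dot. rewrite <- rsum_scal. apply rsum_le. intros i Hi.
  pose proof (Ha i Hi). assert (0 <= x i * x i) by nra. nra.
Qed.

Lemma quad_form_ext n M M' x :
  (forall i j, (1 <= i <= n)%nat -> (1 <= j <= n)%nat -> M i j = M' i j) ->
  quad_form n M x = quad_form n M' x.
Proof.
  intros H. unfold quad_form. apply rsum_ext. intros i Hi. apply rsum_ext. intros j Hj.
  rewrite H by assumption. reflexivity.
Qed.

Lemma quad_form_null n M x : (forall i, (1 <= i <= n)%nat -> x i = 0) -> quad_form n M x = 0.
Proof.
  intros H. unfold quad_form. apply rsum_zero. intros i Hi. rewrite H by exact Hi.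
  apply rsum_zero. intros. ring.
Qed.

Lemma quad_form_diag_congr n M a x :
  quad_form n (fun i j => a i * M i j * a j) x = quad_form n M (fun i => a i * x i).
Proof. unfold quad_form. apply rsum_ext. intros. apply rsum_ext. intros. ring. Qed.

Lemma quad_form_dot n M x : quad_form n M x = dot n x (matvec n M x).
Proof.
  unfold quad_form, dot, matvec. apply rsum_ext. intros i _.
  rewrite <- rsum_scal. apply rsum_ext. intros. ring.
Qed.

Lemma quad_form_scal n M x c : quad_form n M (fun i => c * x i) = c * c * quad_form n M x.
Proof.
  unfold quad_form. rewrite <- rsum_scal. apply rsum_ext. intros i _.
  rewrite <- rsum_scal. apply rsum_ext. intros. ring.
Qed.

Lemma dot_matvec_sym n M x y : symmetric_mat n M ->
  dot n x (matvec n M y) = dot n y (matvec n M x).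
Proof.
  intros HM. unfold dot, matvec.
  transitivity (rsum n (fun i => rsum n (fun j => x i * M i j * y j))).
  { apply rsum_ext. intros. rewrite <- rsum_scal. apply rsum_ext. intros. ring. }
  rewrite rsum_swap. apply rsum_ext. intros j Hj.
  rewrite <- rsum_scal. apply rsum_ext. intros i Hi. rewrite (HM i j) by assumption. ring.
Qed.

Lemma quad_form_line n M x y t : symmetric_mat n M ->
  quad_form n M (fun i => x i + t * y i) =
  quad_form n M x + 2 * t * dot n y (matvec n M x) + t * t * quad_form n M y.
Proof.
  intros HM. rewrite !quad_form_dot.
  transitivity (dot n x (matvec n M x)
    + t * (dot n y (matvec n M x) + dot n x (matvec n M y)) + t * t * dot n y (matvec n M y)).
  - unfold dot.
    transitivity (rsum n (fun i => x i * matvec n M x i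
        + t * (y i * matvec n M x i + x i * matvec n M y i) + t * t * (y i * matvec n M y i))).
    + apply rsum_ext. intros i _.
      replace (matvec n M (fun j => x j + t * y j) i)
        with (matvec n M x i + t * matvec n M y i).
      * ring.
      * unfold matvec. rewrite <- rsum_scal, <- rsum_plus. apply rsum_ext. intros. ring.
    + rewrite !rsum_plus, !rsum_scal, rsum_plus. reflexivity.
  - rewrite (dot_matvec_sym n M x y HM). ring.
Qed.

Lemma quad_form_eigenvector n M v lam :
  (forall i, (1 <= i <= n)%nat -> matvec n M v i = lam * v i) ->
  quad_form n M v = lam * norm2 n v.
Proof.
  intros Hv. rewrite quad_form_dot. unfold norm2, dot. rewrite <- rsum_scal.
  apply rsum_ext. intros i Hi. rewrite Hv by exact Hi. ring.
Qed.

Lemma norm2_line n x y t :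
  norm2 n (fun i => x i + t * y i) = norm2 n x + 2 * t * dot n y x + t * t * norm2 n y.
Proof.
  unfold norm2, dot. rewrite <- !rsum_scal, <- !rsum_plus. apply rsum_ext. intros. ring.
Qed.

Lemma quadratic_nonneg_linear_coef a b : (forall t, 0 <= 2 * t * a + t * t * b) -> a = 0.
Proof.
  intros H. destruct (Req_dec a 0) as [|Ha]; [assumption|exfalso].
  set (B := Rabs b + 1).
  assert (HB : 0 < B) by (unfold B; pose proof (Rabs_pos b); lra).
  assert (Hb : b <= B) by (unfold B; pose proof (Rle_abs b); lra).
  set (t := - a / B). specialize (H t).
  assert (t * t * b <= t * t * B) by (apply Rmult_le_compat_l; [nra|exact Hb]).
  assert (t * t * B = a * a / B) by (unfold t; field; lra).
  assert (2 * t * a = - 2 * (a * a / B)) by (unfold t; field; lra).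
  assert (0 < a * a / B) by (apply Rdiv_lt_0_compat; nra).
  lra.
Qed.

(* By homogeneity, the minimum of x^T M x on the unit sphere bounds it everywhere. *)
Lemma sphere_min_uniform_bound n M v :
  (forall x, norm2 n x = 1 -> quad_form n M v <= quad_form n M x) ->
  forall x, quad_form n M x >= quad_form n M v * norm2 n x.
Proof.
  intros Hmin x. pose proof (norm2_nonneg n x) as Hx0.
  destruct (Req_dec (norm2 n x) 0) as [H0|H0].
  { rewrite H0, (quad_form_null n M x (norm2_zero n x H0)). lra. }
  set (c := / sqrt (norm2 n x)).
  assert (Hs : 0 < sqrt (norm2 n x)) by (apply sqrt_lt_R0; lra).
  assert (Hc : c * c * norm2 n x = 1).
  { unfold c. rewrite <- (sqrt_sqrt (norm2 n x)) at 3 by lra. field. lra. }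
  pose proof (Hmin (fun i => c * x i)) as Hm.
  rewrite norm2_scal, quad_form_scal in Hm. specialize (Hm Hc).
  replace (quad_form n M x) with (c * c * quad_form n M x * norm2 n x).
  - apply Rle_ge, Rmult_le_compat_r; lra.
  - transitivity (quad_form n M x * (c * c * norm2 n x)); [ring|rewrite Hc; ring].
Qed.

(* A unit vector attaining a uniform lower bound lam of x^T M x / |x|^2 is an
   eigenvector for lam: the derivative of x^T M x - lam |x|^2 at v vanishes. *)
Lemma bound_attained_eigenvector n M v lam : symmetric_mat n M ->
  norm2 n v = 1 -> quad_form n M v = lam ->
  (forall x, quad_form n M x >= lam * norm2 n x) ->
  forall i, (1 <= i <= n)%nat -> matvec n M v i = lam * v i.
Proof.
  intros HM Hv Hq Hall.
  set (r := fun i => matvec n M v i - lam * v i).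
  assert (Hr : dot n r (matvec n M v) - lam * dot n r v = norm2 n r).
  { unfold norm2, dot. rewrite <- rsum_scal, <- rsum_minus.
    apply rsum_ext. intros. unfold r. ring. }
  assert (Hr0 : norm2 n r = 0).
  { apply (quadratic_nonneg_linear_coef _ (quad_form n M r - lam * norm2 n r)). intros t.
    pose proof (Hall (fun i => v i + t * r i)) as Ht.
    rewrite quad_form_line, norm2_line in Ht by exact HM. nra. }
  intros i Hi. pose proof (norm2_zero n r Hr0 i Hi) as H. unfold r in H. lra.
Qed.

Lemma rayleigh n M : (1 <= n)%nat -> symmetric_mat n M ->
  exists v lam, norm2 n v = 1 /\
    (forall i, (1 <= i <= n)%nat -> matvec n M v i = lam * v i) /\
    (forall x, quad_form n M x >= lam * norm2 n x).
Proof.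
  intros Hn HM.
  destruct (SphereMinimum.quad_form_min_on_sphere n M Hn) as [v [Hv Hmin]].
  pose proof (sphere_min_uniform_bound n M v Hmin) as Hall.
  exists v, (quad_form n M v). split; [exact Hv|]. split; [|exact Hall].
  exact (bound_attained_eigenvector n M v _ HM Hv eq_refl Hall).
Qed.

Lemma eigenvalue_ge_bound n M K lam :
  (forall x, quad_form n M x >= K * norm2 n x) -> is_eigenvalue n M lam -> K <= lam.
Proof.
  intros HK [v [Hv Heig]].
  pose proof (HK v) as H. rewrite (quad_form_eigenvector n M v lam Heig) in H.
  pose proof (norm2_pos n v Hv).
  apply (Rmult_le_reg_r (norm2 n v)); lra.
Qed.

Lemma smallest_eigenvalue_exists n M : (1 <= n)%nat -> symmetric_mat n M ->
  exists lam, is_smallest_eigenvalue n M lam /\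
    forall x, quad_form n M x >= lam * norm2 n x.
Proof.
  intros Hn HM. destruct (rayleigh n M Hn HM) as [v [lam [Hv [Heig Hall]]]].
  exists lam. split; [split|exact Hall].
  - exists v. split; [apply norm2_pos_nonzero; lra|exact Heig].
  - intros mu Hmu. exact (eigenvalue_ge_bound n M lam mu Hall Hmu).
Qed.

Lemma uniform_bound_pos_def n M K : symmetric_mat n M -> 0 < K ->
  (forall x, quad_form n M x >= K * norm2 n x) -> sym_pos_def n M.
Proof.
  intros HM HK Hall. split; [exact HM|]. intros x Hx.
  pose proof (norm2_pos n x Hx). pose proof (Hall x). nra.
Qed.

Definition transpose (B : nat -> nat -> R) (i j : nat) : R := B j i.

Definition gram (K : nat) (B : nat -> nat -> R) (i j : nat) : R :=
  rsum K (fun k => B k i * B k j).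

Definition weighted_gram (K : nat) (c : nat -> R) (B : nat -> nat -> R) (i j : nat) : R :=
  rsum K (fun k => c k * B k i * B k j).

Lemma rsum_mult n m f g :
  rsum n f * rsum m g = rsum n (fun i => rsum m (fun j => f i * g j)).
Proof.
  rewrite Rmult_comm, <- rsum_scal. apply rsum_ext. intros i _.
  rewrite Rmult_comm, <- rsum_scal. reflexivity.
Qed.

Lemma gram_sym n K B : symmetric_mat n (gram K B).
Proof. intros i j _ _. unfold gram. apply rsum_ext. intros. ring. Qed.

Lemma quad_weighted_gram n K c B y :
  quad_form n (weighted_gram K c B) y =
  rsum K (fun k => c k * (matvec n B y k * matvec n B y k)).
Proof.
  unfold quad_form, weighted_gram, matvec.
  transitivity (rsum K (fun k => rsum n (fun i => rsum n (fun j =>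
                  y i * (c k * B k i * B k j) * y j)))).
  - symmetry. rewrite rsum_swap. apply rsum_ext. intros i _. rewrite rsum_swap.
    apply rsum_ext. intros j _.
    transitivity (y i * y j * rsum K (fun k => c k * B k i * B k j)); [|ring].
    rewrite <- rsum_scal. apply rsum_ext. intros. ring.
  - apply rsum_ext. intros k _. rewrite rsum_mult, <- rsum_scal.
    apply rsum_ext. intros i _. rewrite <- rsum_scal. apply rsum_ext. intros. ring.
Qed.

Lemma quad_weighted_gram_ge n K c B m y : (forall k, (1 <= k <= K)%nat -> m <= c k) ->
  quad_form n (weighted_gram K c B) y >= m * norm2 K (matvec n B y).
Proof.
  intros Hc. rewrite quad_weighted_gram. unfold norm2, dot. rewrite <- rsum_scal.
  apply Rle_ge, rsum_le. intros k Hk. pose proof (Hc k Hk).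
  assert (0 <= matvec n B y k * matvec n B y k) by nra. nra.
Qed.

Lemma quad_gram n K B y : quad_form n (gram K B) y = norm2 K (matvec n B y).
Proof.
  rewrite (quad_form_ext n _ (weighted_gram K (fun _ => 1) B)).
  - rewrite quad_weighted_gram. apply rsum_ext. intros. ring.
  - intros. unfold gram, weighted_gram. apply rsum_ext. intros. ring.
Qed.

Lemma matvec_gram n K B v i :
  matvec n (gram K B) v i = matvec K (transpose B) (matvec n B v) i.
Proof.
  unfold matvec, gram, transpose.
  transitivity (rsum n (fun j => rsum K (fun k => B k i * B k j * v j))).
  - apply rsum_ext. intros. rewrite Rmult_comm, <- rsum_scal. apply rsum_ext. intros. ring.
  - rewrite rsum_swap. apply rsum_ext. intros. rewrite <- rsum_scal. apply rsum_ext. intros. ring.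
Qed.

Definition injective_on (n : nat) (B : nat -> nat -> R) : Prop :=
  forall v, (forall i, (1 <= i <= n)%nat -> matvec n B v i = 0) ->
  forall i, (1 <= i <= n)%nat -> v i = 0.

Lemma injective_norm2_pos n B v : injective_on n B -> nonzero_vec n v ->
  0 < norm2 n (matvec n B v).
Proof.
  intros HB [i [Hi Hvi]]. destruct (Rle_lt_or_eq_dec _ _ (norm2_nonneg n (matvec n B v)))
    as [H|H]; [exact H|].
  exfalso. apply Hvi. exact (HB v (norm2_zero n _ (eq_sym H)) i Hi).
Qed.

Lemma gram_eigenvalue_pos n B lam : injective_on n B -> is_eigenvalue n (gram n B) lam ->
  0 < lam.
Proof.
  intros HB [v [Hv Heig]].
  pose proof (quad_form_eigenvector n _ v lam Heig) as Hq. rewrite quad_gram in Hq.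
  pose proof (injective_norm2_pos n B v HB Hv). pose proof (norm2_pos n v Hv). nra.
Qed.

(* A lower bound |B x|^2 >= t |x|^2 transfers from B to B^T when B^T is injective:
   the smallest eigenvalue mu of B B^T, with unit eigenvector v, satisfies
   |B^T v|^2 = mu and |B (B^T v)|^2 = mu^2 >= t mu. *)
Lemma norm_bound_transpose n B t : (1 <= n)%nat -> injective_on n (transpose B) ->
  (forall x, norm2 n (matvec n B x) >= t * norm2 n x) ->
  forall y, norm2 n (matvec n (transpose B) y) >= t * norm2 n y.
Proof.
  intros Hn HBt Ht y.
  destruct (rayleigh n (gram n (transpose B)) Hn (gram_sym n n _))
    as [v [mu [Hv [Heig Hall]]]].
  set (u := matvec n (transpose B) v).
  assert (Hu : norm2 n u = mu).
  { unfold u. rewrite <- quad_gram, (quad_form_eigenvector n _ v mu Heig), Hv. ring. }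
  assert (HBu : norm2 n (matvec n B u) = mu * mu).
  { transitivity (norm2 n (fun i => mu * v i)).
    - apply rsum_ext. intros i Hi. rewrite <- (Heig i Hi), matvec_gram. reflexivity.
    - rewrite norm2_scal, Hv. ring. }
  assert (Hmu : 0 < mu).
  { rewrite <- Hu. apply injective_norm2_pos; [exact HBt|apply norm2_pos_nonzero; lra]. }
  assert (Htmu : t <= mu).
  { pose proof (Ht u) as H. rewrite HBu, Hu in H. apply (Rmult_le_reg_r mu); lra. }
  pose proof (Hall y) as H. rewrite quad_gram in H. pose proof (norm2_nonneg n y). nra.
Qed.

Definition lower_unitriangular (n : nat) (L : nat -> nat -> R) : Prop :=
  forall i, (1 <= i <= n)%nat -> L i i = 1 /\ forall j, (i < j <= n)%nat -> L i j = 0.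

(* Forward substitution: L v = 0 forces v_1 = v_2 = ... = v_n = 0. *)
Lemma lower_unitriangular_injective n L : lower_unitriangular n L -> injective_on n L.
Proof.
  intros HL v Hv.
  assert (H : forall m i, (1 <= i <= n)%nat -> (i <= m)%nat -> v i = 0).
  { induction m; intros i Hi Him; [lia|].
    destruct (le_lt_dec i m) as [Hl|Hl]; [apply IHm; assumption|].
    destruct (HL i Hi) as [Hii Hij].
    pose proof (Hv i Hi) as H0. unfold matvec in H0.
    rewrite (rsum_single n i) in H0.
    - rewrite Hii in H0. lra.
    - exact Hi.
    - intros j Hj Hji. destruct (lt_dec j i).
      + rewrite (IHm j) by lia. ring.
      + rewrite Hij by lia. ring. }
  intros i Hi. apply (H i i Hi). lia.
Qed.

(* Backward substitution: L^T v = 0 forces v_n = v_{n-1} = ... = v_1 = 0. *)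
Lemma lower_unitriangular_transpose_injective n L :
  lower_unitriangular n L -> injective_on n (transpose L).
Proof.
  intros HL v Hv.
  assert (H : forall k i, (1 <= i <= n)%nat -> (n < i + k)%nat -> v i = 0).
  { induction k; intros i Hi Hik; [lia|].
    destruct (lt_dec n (i + k)) as [Hl|Hl]; [apply IHk; assumption|].
    destruct (HL i Hi) as [Hii _].
    pose proof (Hv i Hi) as H0. unfold matvec, transpose in H0.
    rewrite (rsum_single n i) in H0.
    - rewrite Hii in H0. lra.
    - exact Hi.
    - intros j Hj Hji. destruct (lt_dec j i).
      + destruct (HL j Hj) as [_ Hjz]. rewrite Hjz by lia. ring.
      + rewrite (IHk j) by lia. ring. }
  intros i Hi. apply (H n i Hi). lia.
Qed.

Definition nat_prime (q : nat) : Prop := prime (Z.of_nat q).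

Lemma divide_Z a b : Nat.divide a b <-> Z.divide (Z.of_nat a) (Z.of_nat b).
Proof.
  split.
  - intros [k ->]. exists (Z.of_nat k). apply Nat2Z.inj_mul.
  - intros H. destruct (Nat.eq_dec a 0) as [->|Ha].
    + destruct H as [z Hz]. simpl in Hz. rewrite Z.mul_0_r in Hz. exists 0%nat. lia.
    + apply Nat.Lcm0.mod_divide. apply Nat2Z.inj. rewrite Nat2Z.inj_mod.
      simpl. apply Zdivide_mod. exact H.
Qed.

Lemma nat_prime_ge2 q : nat_prime q -> (2 <= q)%nat.
Proof. intros H. apply prime_ge_2 in H. lia. Qed.

Lemma nat_prime_mult q a b : nat_prime q -> Nat.divide q (a * b) ->
  Nat.divide q a \/ Nat.divide q b.
Proof.
  intros Hq H. apply divide_Z in H. rewrite Nat2Z.inj_mul in H.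
  destruct (prime_mult _ Hq _ _ H) as [H1|H1]; [left|right]; apply divide_Z; exact H1.
Qed.

Lemma nat_prime_div_prime q p : nat_prime q -> nat_prime p -> Nat.divide q p -> q = p.
Proof.
  intros Hq Hp H. apply divide_Z in H. apply Nat2Z.inj. apply prime_div_prime; assumption.
Qed.

Lemma divide_prime_mul_coprime p d k : nat_prime p -> ~ Nat.divide p d ->
  Nat.divide d (p * k) -> Nat.divide d k.
Proof.
  intros Hp Hpd H. apply divide_Z. apply divide_Z in H. rewrite Nat2Z.inj_mul in H.
  apply (Gauss _ (Z.of_nat p)); [exact H|].
  apply rel_prime_sym. apply prime_rel_prime; [exact Hp|].
  intros H'. apply Hpd. apply divide_Z. exact H'.
Qed.

Lemma prime_divisor_exists m : (2 <= m)%nat -> exists p, nat_prime p /\ Nat.divide p m.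
Proof.
  induction m as [m IH] using lt_wf_ind. intros Hm.
  destruct (prime_dec (Z.of_nat m)) as [Hp|Hp].
  - exists m. split; [exact Hp|apply Nat.divide_refl].
  - destruct (not_prime_divide (Z.of_nat m)) as [z [Hz Hzm]]; [lia|exact Hp|].
    destruct (IH (Z.to_nat z)) as [p [Hp1 Hp2]]; [lia|lia|].
    exists p. split; [exact Hp1|]. apply (Nat.divide_trans _ (Z.to_nat z)); [exact Hp2|].
    apply divide_Z. rewrite Z2Nat.id by lia. exact Hzm.
Qed.

Lemma gcd_mul_lcm a b : (Nat.gcd a b * Nat.lcm a b = a * b)%nat.
Proof.
  unfold Nat.lcm. destruct (Nat.eq_dec (Nat.gcd a b) 0) as [H0|H0].
  - apply Nat.gcd_eq_0 in H0. destruct H0 as [-> ->]. reflexivity.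
  - destruct (Nat.gcd_divide_r a b) as [k Hk].
    remember (Nat.gcd a b) as g. subst b. rewrite Nat.div_mul by exact H0. ring.
Qed.

Lemma Emat_cases m d : d <> 0%nat ->
  (Nat.divide d m /\ Emat m d = 1) \/ (~ Nat.divide d m /\ Emat m d = 0).
Proof.
  intros Hd. unfold Emat. destruct (Nat.eqb_spec (m mod d) 0) as [H|H].
  - left. split; [apply Nat.Lcm0.mod_divide; exact H|reflexivity].
  - right. split; [|reflexivity]. intros H'. apply H, Nat.Lcm0.mod_divide, H'.
Qed.

Lemma Emat_gt m d : (1 <= m < d)%nat -> Emat m d = 0.
Proof.
  intros H. unfold Emat. rewrite Nat.mod_small by lia.
  destruct (Nat.eqb_spec m 0); [lia|reflexivity].
Qed.

Lemma Emat_unitriangular n : lower_unitriangular n Emat.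
Proof.
  intros i Hi. split.
  - unfold Emat. rewrite Nat.Div0.mod_same. reflexivity.
  - intros j Hj. apply Emat_gt. lia.
Qed.

Lemma rsum_multiples p M g : (1 <= p)%nat ->
  rsum (p * M) (fun d => Emat d p * g d) = rsum M (fun e => g (p * e)%nat).
Proof.
  intros Hp. induction M.
  - rewrite Nat.mul_0_r. reflexivity.
  - rewrite Nat.mul_succ_r, rsum_split, IHM. simpl (rsum (S M) _). f_equal.
    rewrite (rsum_single p p).
    + unfold Emat. replace (p * M + p)%nat with (p * S M)%nat by lia.
      rewrite (Nat.mul_comm p (S M)), Nat.Div0.mod_mul. simpl. ring.
    + lia.
    + intros r Hr Hrp. unfold Emat.
      replace (p * M + r)%nat with (r + M * p)%nat by lia.
      rewrite Nat.Div0.mod_add, Nat.mod_small by lia.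
      destruct (Nat.eqb_spec r 0); [lia|ring].
Qed.

Lemma rprod_ext n f g : (forall i, (1 <= i <= n)%nat -> f i = g i) -> rprod n f = rprod n g.
Proof.
  induction n; simpl; intros H; [reflexivity|].
  rewrite IHn, H by (intros; try apply H; lia). reflexivity.
Qed.

Lemma rprod_trunc n N f : (n <= N)%nat -> (forall i, (n < i <= N)%nat -> f i = 1) ->
  rprod N f = rprod n f.
Proof.
  intros HN. induction N; intros H.
  - replace n with 0%nat by lia. reflexivity.
  - destruct (Nat.eq_dec n (S N)) as [->|Hne]; [reflexivity|].
    simpl. rewrite IHN, H by (try lia; intros; apply H; lia). ring.
Qed.

Lemma rprod_single_diff L p c f g : (1 <= p <= L)%nat ->
  (forall q, (1 <= q <= L)%nat -> q <> p -> f q = g q) -> f p = c * g p ->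
  rprod L f = c * rprod L g.
Proof.
  induction L; intros Hp H Hfp; [lia|]. simpl.
  destruct (Nat.eq_dec p (S L)) as [->|Hne].
  - rewrite (rprod_ext L f g) by (intros; apply H; lia). rewrite Hfp. ring.
  - rewrite IHL, (H (S L)) by (try exact Hfp; try lia; intros; apply H; lia). ring.
Qed.

Lemma rprod_pos n f : (forall i, (1 <= i <= n)%nat -> 0 < f i) -> 0 < rprod n f.
Proof.
  induction n; simpl; intros H; [lra|].
  apply Rmult_lt_0_compat; [apply IHn; intros; apply H; lia|apply H; lia].
Qed.

Definition jordan_term (s : R) (k q : nat) : R :=
  if prime_dec (Z.of_nat q) then
    (if Nat.eqb (k mod q) 0 then 1 - Rpower (INR q) (- s) else 1)
  else 1.

(* prod_{q <= L prime, q | k} (1 - q^{-s}), so that J_s(k) = k^s jordan_factor s k k. *)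
Definition jordan_factor (s : R) (L k : nat) : R := rprod L (jordan_term s k).

Lemma Rpower_pos x s : 0 < Rpower x s.
Proof. unfold Rpower. apply exp_pos. Qed.

Lemma Rpower_1_base s : Rpower 1 s = 1.
Proof. unfold Rpower. rewrite ln_1, Rmult_0_r. apply exp_0. Qed.

Lemma jordan_term_eq s a b q : (nat_prime q -> (Nat.divide q a <-> Nat.divide q b)) ->
  jordan_term s a q = jordan_term s b q.
Proof.
  intros H. unfold jordan_term. destruct (prime_dec (Z.of_nat q)) as [Hq|]; [|reflexivity].
  specialize (H Hq).
  destruct (Nat.eqb_spec (a mod q) 0) as [Ha|Ha], (Nat.eqb_spec (b mod q) 0) as [Hb|Hb];
    try reflexivity; exfalso.
  - apply Hb, Nat.Lcm0.mod_divide, H, Nat.Lcm0.mod_divide, Ha.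
  - apply Ha, Nat.Lcm0.mod_divide, H, Nat.Lcm0.mod_divide, Hb.
Qed.

Lemma jordan_factor_trunc s L k : (1 <= k <= L)%nat -> jordan_factor s L k = jordan_factor s k k.
Proof.
  intros H. apply rprod_trunc; [lia|]. intros q Hq. unfold jordan_term.
  destruct (prime_dec (Z.of_nat q)); [|reflexivity].
  rewrite Nat.mod_small by lia. destruct (Nat.eqb_spec k 0); [lia|reflexivity].
Qed.

Lemma jordan_factor_mul_dvd s L p k : nat_prime p -> Nat.divide p k ->
  jordan_factor s L (p * k) = jordan_factor s L k.
Proof.
  intros Hp Hpk. apply rprod_ext. intros q _. apply jordan_term_eq. intros Hq. split.
  - intros H. destruct (nat_prime_mult q p k Hq H) as [H1|H1]; [|exact H1].
    rewrite (nat_prime_div_prime q p Hq Hp H1). exact Hpk.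
  - apply Nat.divide_mul_r.
Qed.

Lemma jordan_factor_mul_ndvd s L p k : nat_prime p -> ~ Nat.divide p k -> (p <= L)%nat ->
  jordan_factor s L (p * k) = (1 - Rpower (INR p) (- s)) * jordan_factor s L k.
Proof.
  intros Hp Hpk HL. pose proof (nat_prime_ge2 p Hp) as Hp2.
  apply (rprod_single_diff L p); [lia| |].
  - intros q _ Hqp. apply jordan_term_eq. intros Hq. split.
    + intros H. destruct (nat_prime_mult q p k Hq H) as [H1|H1]; [|exact H1].
      exfalso. exact (Hqp (nat_prime_div_prime q p Hq Hp H1)).
    + apply Nat.divide_mul_r.
  - unfold jordan_term. destruct (prime_dec (Z.of_nat p)) as [_|Hn]; [|contradiction].
    rewrite Nat.mul_comm, Nat.Div0.mod_mul. simpl.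
    destruct (Nat.eqb_spec (k mod p) 0) as [H|H]; [|ring].
    exfalso. apply Hpk, Nat.Lcm0.mod_divide, H.
Qed.

Lemma Jordan_one s : Jordan s 1 = 1.
Proof.
  change (Rpower (INR 1) s * (1 * jordan_term s 1 1) = 1). unfold jordan_term.
  destruct (prime_dec (Z.of_nat 1)) as [H|H].
  - apply nat_prime_ge2 in H. lia.
  - simpl. rewrite Rpower_1_base. ring.
Qed.

Lemma Jordan_mul_prime s p k : nat_prime p -> (1 <= k)%nat ->
  Jordan s (p * k) = (Rpower (INR p) s - (1 - Emat k p)) * Jordan s k.
Proof.
  intros Hp Hk. pose proof (nat_prime_ge2 p Hp).
  change (Rpower (INR (p * k)) s * jordan_factor s (p * k) (p * k)
          = (Rpower (INR p) s - (1 - Emat k p)) * (Rpower (INR k) s * jordan_factor s k k)).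
  rewrite mult_INR, <- Rpower_mult_distr by (apply lt_0_INR; lia).
  destruct (Emat_cases k p) as [[Hd ->]|[Hd ->]]; [lia| |].
  - rewrite jordan_factor_mul_dvd, (jordan_factor_trunc s (p * k) k) by (assumption || nia).
    ring.
  - rewrite jordan_factor_mul_ndvd, (jordan_factor_trunc s (p * k) k) by (assumption || nia).
    rewrite Rpower_Ropp. pose proof (Rpower_pos (INR p) s). field. lra.
Qed.

Lemma Jordan_pos s k : 0 < s -> (1 <= k)%nat -> 0 < Jordan s k.
Proof.
  intros Hs Hk. apply Rmult_lt_0_compat; [apply Rpower_pos|].
  apply rprod_pos. intros q Hq. unfold jordan_term.
  destruct (prime_dec (Z.of_nat q)) as [Hq'|]; [|lra].
  destruct (Nat.eqb (k mod q) 0); [|lra].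
  assert (Hln : 0 < ln (INR q)).
  { rewrite <- ln_1. apply ln_increasing; [lra|]. apply lt_1_INR.
    pose proof (nat_prime_ge2 q Hq'). lia. }
  unfold Rpower. assert (exp (- s * ln (INR q)) < exp 0) by (apply exp_increasing; nra).
  rewrite exp_0 in H. lra.
Qed.

Lemma Emat_prime_mul_coprime p k d : nat_prime p -> (1 <= d)%nat ->
  Emat (p * k) d * (1 - Emat d p) = Emat k d * (1 - Emat d p).
Proof.
  intros Hp Hd. pose proof (nat_prime_ge2 p Hp).
  destruct (Emat_cases d p ltac:(lia)) as [[Hdp ->]|[Hdp ->]]; [ring|].
  destruct (Emat_cases (p * k) d ltac:(lia)) as [[H1 ->]|[H1 ->]],
    (Emat_cases k d ltac:(lia)) as [[H2 ->]|[H2 ->]]; try ring; exfalso.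
  - exact (H2 (divide_prime_mul_coprime p d k Hp Hdp H1)).
  - exact (H1 (Nat.divide_mul_r _ _ _ H2)).
Qed.

Lemma Emat_mul_cancel p k e : (1 <= p)%nat -> (1 <= e)%nat ->
  Emat (p * k) (p * e) = Emat k e.
Proof.
  intros Hp He.
  destruct (Emat_cases (p * k) (p * e) ltac:(lia)) as [[H1 ->]|[H1 ->]],
    (Emat_cases k e ltac:(lia)) as [[H2 ->]|[H2 ->]]; try reflexivity; exfalso.
  - exact (H2 (proj1 (Nat.mul_divide_cancel_l e k p ltac:(lia)) H1)).
  - exact (H1 (proj2 (Nat.mul_divide_cancel_l e k p ltac:(lia)) H2)).
Qed.

(* The divisors of p k split into
   those prime to p, which are the divisors of k prime to p, and the multiples p e
   with e | k, where J_s(p e) = (p^s - [p does not divide e]) J_s(e). *)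
Lemma divisor_sum_prime_step s p k : nat_prime p -> (1 <= k)%nat ->
  rsum (p * k) (fun d => Emat (p * k) d * Jordan s d) =
  Rpower (INR p) s * rsum k (fun d => Emat k d * Jordan s d).
Proof.
  intros Hp Hk. pose proof (nat_prime_ge2 p Hp) as Hp2.
  assert (Hprime_to_p :
    rsum (p * k) (fun d => Emat (p * k) d * (1 - Emat d p) * Jordan s d)
    = rsum k (fun d => Emat k d * (1 - Emat d p) * Jordan s d)).
  { transitivity (rsum (p * k) (fun d => Emat k d * (1 - Emat d p) * Jordan s d)).
    - apply rsum_ext. intros d Hd. rewrite Emat_prime_mul_coprime by (assumption || lia).
      reflexivity.
    - apply rsum_trunc; [nia|]. intros d Hd. rewrite Emat_gt by lia. ring. }
  assert (Hmultiples :
    rsum (p * k) (fun d => Emat d p * (Emat (p * k) d * Jordan s d))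
    = rsum k (fun e => Emat k e * ((Rpower (INR p) s - (1 - Emat e p)) * Jordan s e))).
  { rewrite rsum_multiples by lia. apply rsum_ext. intros e He.
    rewrite Emat_mul_cancel, Jordan_mul_prime by (assumption || lia). reflexivity. }
  transitivity (rsum (p * k) (fun d => Emat (p * k) d * (1 - Emat d p) * Jordan s d)
                + rsum (p * k) (fun d => Emat d p * (Emat (p * k) d * Jordan s d))).
  { rewrite <- rsum_plus. apply rsum_ext. intros. ring. }
  rewrite Hprime_to_p, Hmultiples, <- rsum_scal, <- rsum_plus.
  apply rsum_ext. intros. ring.
Qed.

Lemma Jordan_divisor_sum s N m : (1 <= m <= N)%nat ->
  rsum N (fun d => Emat m d * Jordan s d) = Rpower (INR m) s.
Proof.
  intros HmN. rewrite (rsum_trunc m N) by (try lia; intros; rewrite Emat_gt by lia; ring).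
  assert (Hm : (1 <= m)%nat) by lia. clear HmN N.
  induction m as [m IH] using lt_wf_ind.
  destruct (Nat.eq_dec m 1) as [->|Hm1].
  - simpl. rewrite Jordan_one, Rpower_1_base. unfold Emat. simpl. ring.
  - destruct (prime_divisor_exists m) as [p [Hp [k ->]]]; [lia|].
    pose proof (nat_prime_ge2 p Hp).
    rewrite Nat.mul_comm, divisor_sum_prime_step, IH by (assumption || nia).
    rewrite mult_INR, Rpower_mult_distr by (apply lt_0_INR; nia). reflexivity.
Qed.

Lemma gcd_power_gram s n i j : (1 <= i <= n)%nat -> (1 <= j <= n)%nat ->
  Rpower (INR (Nat.gcd i j)) s = weighted_gram n (Jordan s) (transpose Emat) i j.
Proof.
  intros Hi Hj.
  assert (Hg : (Nat.gcd i j <> 0)%nat) by (intros H; apply Nat.gcd_eq_0 in H; lia).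
  assert (Hgi : (Nat.gcd i j <= i)%nat)
    by (apply Nat.divide_pos_le; [lia|apply Nat.gcd_divide_l]).
  rewrite <- (Jordan_divisor_sum s n) by lia. apply rsum_ext. intros d Hd.
  unfold transpose.
  assert (Hcommon : Emat (Nat.gcd i j) d = Emat i d * Emat j d).
  { destruct (Emat_cases i d ltac:(lia)) as [[H1 ->]|[H1 ->]],
      (Emat_cases j d ltac:(lia)) as [[H2 ->]|[H2 ->]],
      (Emat_cases (Nat.gcd i j) d ltac:(lia)) as [[H3 ->]|[H3 ->]]; try ring; exfalso.
    - exact (H3 (Nat.gcd_greatest _ _ _ H1 H2)).
    - exact (H2 (Nat.divide_trans _ _ _ H3 (Nat.gcd_divide_r i j))).
    - exact (H1 (Nat.divide_trans _ _ _ H3 (Nat.gcd_divide_l i j))).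
    - exact (H1 (Nat.divide_trans _ _ _ H3 (Nat.gcd_divide_l i j))). }
  rewrite Hcommon. ring.
Qed.

Lemma rmin1_le m f i : (1 <= i <= S m)%nat -> rmin1 m f <= f i.
Proof.
  induction m; intros Hi; simpl.
  - replace i with 1%nat by lia. lra.
  - destruct (Nat.eq_dec i (S (S m))) as [->|Hne]; [apply Rmin_r|].
    pose proof (Rmin_l (rmin1 m f) (f (S (S m)))). pose proof (IHm ltac:(lia)). lra.
Qed.

Lemma rmin1_pos m f : (forall i, (1 <= i <= S m)%nat -> 0 < f i) -> 0 < rmin1 m f.
Proof.
  induction m; intros H; simpl.
  - apply H. lia.
  - apply Rmin_glb_lt; [apply IHm; intros; apply H; lia|apply H; lia].
Qed.

Lemma min_1_to_le n f i : (1 <= i <= n)%nat -> min_1_to n f <= f i.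
Proof. intros Hi. apply rmin1_le. lia. Qed.

Lemma min_1_to_pos n f : (1 <= n)%nat -> (forall i, (1 <= i <= n)%nat -> 0 < f i) ->
  0 < min_1_to n f.
Proof. intros Hn H. apply rmin1_pos. intros. apply H. lia. Qed.

Lemma Rpower_sq_ge_min n i beta : (1 <= i <= n)%nat ->
  Rmin 1 (Rpower (INR n) (2 * beta)) <= Rpower (INR i) beta * Rpower (INR i) beta.
Proof.
  intros Hi. rewrite <- Rpower_plus. replace (beta + beta) with (2 * beta) by ring.
  assert (H1 : 1 <= INR i) by (apply (le_INR 1); lia).
  assert (H2 : INR i <= INR n) by (apply le_INR; lia).
  destruct (Rle_or_lt 0 beta) as [Hb|Hb].
  - apply (Rle_trans _ 1); [apply Rmin_l|].
    rewrite <- (Rpower_1_base (2 * beta)). apply Rle_Rpower_l; lra.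
  - apply (Rle_trans _ (Rpower (INR n) (2 * beta))); [apply Rmin_r|].
    set (c := - (2 * beta)). replace (2 * beta) with (- c) by (unfold c; ring).
    rewrite !Rpower_Ropp. apply Rinv_le_contravar; [apply Rpower_pos|].
    apply Rle_Rpower_l; unfold c; lra.
Qed.

Lemma Amat_sym alpha beta n : symmetric_mat n (Amat alpha beta).
Proof. intros i j _ _. unfold Amat. rewrite Nat.gcd_comm, Nat.lcm_comm. reflexivity. Qed.

(* (i,j)^alpha [i,j]^beta = i^beta (i,j)^(alpha - beta) j^beta, as (i,j) [i,j] = i j. *)
Lemma Amat_factor alpha beta i j : (1 <= i)%nat -> (1 <= j)%nat ->
  Amat alpha beta i j =
  Rpower (INR i) beta * Rpower (INR (Nat.gcd i j)) (alpha - beta) * Rpower (INR j) beta.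
Proof.
  intros Hi Hj. unfold Amat.
  assert (Hg : (Nat.gcd i j <> 0)%nat) by (intros H; apply Nat.gcd_eq_0 in H; lia).
  assert (Hl : (Nat.lcm i j <> 0)%nat) by (intros H; apply Nat.lcm_eq_0 in H; lia).
  replace alpha with ((alpha - beta) + beta) at 1 by ring.
  rewrite Rpower_plus, Rmult_assoc, Rpower_mult_distr by (apply lt_0_INR; lia).
  rewrite <- mult_INR, gcd_mul_lcm, mult_INR.
  rewrite <- Rpower_mult_distr by (apply lt_0_INR; lia). ring.
Qed.

Lemma quad_Amat n alpha beta x :
  quad_form n (Amat alpha beta) x =
  quad_form n (weighted_gram n (Jordan (alpha - beta)) (transpose Emat))
               (fun i => Rpower (INR i) beta * x i).
Proof.
  rewrite <- quad_form_diag_congr. apply quad_form_ext. intros i j Hi Hj.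
  rewrite Amat_factor, (gcd_power_gram (alpha - beta) n i j) by lia. reflexivity.
Qed.

Lemma Amat_quad_lower_bound n alpha beta t : (1 <= n)%nat -> alpha > beta -> 0 <= t ->
  (forall x, norm2 n (matvec n Emat x) >= t * norm2 n x) ->
  forall x, quad_form n (Amat alpha beta) x >=
    t * min_1_to n (Jordan (alpha - beta)) * Rmin 1 (Rpower (INR n) (2 * beta)) * norm2 n x.
Proof.
  intros Hn Hab Ht HE x.
  set (y := fun i => Rpower (INR i) beta * x i).
  set (mJ := min_1_to n (Jordan (alpha - beta))).
  set (c := Rmin 1 (Rpower (INR n) (2 * beta))).
  assert (HmJ : 0 <= mJ).
  { apply Rlt_le, min_1_to_pos; [exact Hn|]. intros. apply Jordan_pos; lia || lra. }
  assert (Hy : c * norm2 n x <= norm2 n y).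
  { apply norm2_scale_ge. intros. apply Rpower_sq_ge_min. assumption. }
  assert (HEt : norm2 n (matvec n (transpose Emat) y) >= t * norm2 n y).
  { apply (norm_bound_transpose n Emat t Hn); [|exact HE].
    apply lower_unitriangular_transpose_injective, Emat_unitriangular. }
  assert (HJ : quad_form n (weighted_gram n (Jordan (alpha - beta)) (transpose Emat)) y
               >= mJ * norm2 n (matvec n (transpose Emat) y)).
  { apply quad_weighted_gram_ge. intros. apply min_1_to_le. assumption. }
  rewrite quad_Amat. fold y.
  assert (t * c * norm2 n x <= t * norm2 n y) by (rewrite Rmult_assoc; apply Rmult_le_compat_l; lra).
  assert (mJ * (t * c * norm2 n x) <= mJ * norm2 n (matvec n (transpose Emat) y))
    by (apply Rmult_le_compat_l; lra).
  lra.
Qed.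

Theorem theorem3p1 (n : nat) (alpha beta : R) :
  (1 <= n)%nat -> alpha > beta ->
  sym_pos_def n (Amat alpha beta) /\
  exists lam1 tn : R,
    is_smallest_eigenvalue n (Amat alpha beta) lam1 /\
    is_smallest_eigenvalue n (EtE n) tn /\
    lam1 >= tn * min_1_to n (Jordan (alpha - beta))
               * Rmin 1 (Rpower (INR n) (2 * beta)) /\
    tn * min_1_to n (Jordan (alpha - beta))
       * Rmin 1 (Rpower (INR n) (2 * beta)) > 0.
Proof.
  intros Hn Hab.
  (* t_n: the smallest eigenvalue of E^T E, positive since E is injective. *)
  destruct (smallest_eigenvalue_exists n (EtE n) Hn (gram_sym n n Emat)) as [t [Ht HtE]].
  assert (Ht_pos : 0 < t).
  { apply (gram_eigenvalue_pos n Emat t); [|exact (proj1 Ht)].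
    apply lower_unitriangular_injective, Emat_unitriangular. }
  assert (HE : forall x, norm2 n (matvec n Emat x) >= t * norm2 n x).
  { intros x. rewrite <- quad_gram. exact (HtE x). }
  pose proof (Amat_quad_lower_bound n alpha beta t Hn Hab (Rlt_le _ _ Ht_pos) HE) as HA.
  assert (HK : t * min_1_to n (Jordan (alpha - beta))
                 * Rmin 1 (Rpower (INR n) (2 * beta)) > 0).
  { repeat apply Rmult_lt_0_compat.
    - exact Ht_pos.
    - apply min_1_to_pos; [exact Hn|]. intros. apply Jordan_pos; lia || lra.
    - apply Rmin_glb_lt; [lra|apply Rpower_pos]. }
  destruct (smallest_eigenvalue_exists n (Amat alpha beta) Hn (Amat_sym alpha beta n))
    as [lam [Hlam _]].
  split; [exact (uniform_bound_pos_def n _ _ (Amat_sym alpha beta n) HK HA)|].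
  exists lam, t. split; [exact Hlam|]. split; [exact Ht|]. split; [|exact HK].
  apply Rle_ge, (eigenvalue_ge_bound n _ _ lam HA (proj1 Hlam)).
Qed.
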